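(* Let $n\geq 2$ and let $(A,\cdot,[\cdot,\ldots,\cdot])$ be a transposed Poisson $n$-Lie algebra. Then for all $h,x_1,\ldots,x_n,y_2,\ldots,y_n\in A$, $$\sum_{j=2}^n[[x_1,\ldots,x_n],y_2,\ldots,y_jh,\ldots,y_n]=\sum_{i=1}^n\sum_{\substack{j=1\\ j\neq i}}^n(-1)^{i-1}[[x_i,y_2,\ldots,y_n],x_1,\ldots,x_jh,\ldots,\hat{x}_i,\ldots,x_n],$$ where on the left $y_jh$ replaces $y_j$ in its slot, and on the right the outer bracket has as its remaining arguments $x_1,\ldots,x_n$ in order with $x_i$ omitted and $x_j$ replaced by $x_jh$.
   Context: An $n$-Lie algebra is a vector space $L$ with an $n$-linear skew-symmetric bracket $[\cdot,\ldots,\cdot]$ satisfying $[[x_1,\ldots,x_n],y_2,\ldots,y_n]=\sum_{i=1}^n[x_1,\ldots,x_{i-1},[x_i,y_2,\ldots,y_n],x_{i+1},\ldots,x_n]$ for all $x_i,y_j\in L$. A transposed Poisson $n$-Lie algebra (over $\mathbb{C}$) is a triple $(A,\cdot,[\cdot,\ldots,\cdot])$ where $(A,\cdot)$ is a commutative associative algebra, $(A,[\cdot,\ldots,\cdot])$ is an $n$-Lie algebra, and for all $h,a_1,\ldots,a_n\in A$: $n\,h\,[a_1,\ldots,a_n]=\sum_{i=1}^n[a_1,\ldots,h a_i,\ldots,a_n]$ (with $ha_i$ in the $i$-th slot). $\hat{x}_i$ means $x_i$ is omitted. *)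

(* The base field C is modelled as complex R = R[i] for an
   arbitrary R : realType (a complete archimedean ordered field, i.e. the reals),
   which is the field of complex numbers. *)
From HB Require Import structures.
From mathcomp Require Import all_boot all_order all_algebra all_fingroup.
From mathcomp Require Import complex.
From mathcomp Require Import reals.
Set Implicit Arguments. Unset Strict Implicit. Unset Printing Implicit Defensive.
Import Order.TTheory GRing.Theory Num.Theory.
Local Open Scope ring_scope.

Section TPnLie.
Variable (K : pzRingType) (A : lmodType K).

Definition replace (m : nat) (x : {ffun 'I_m -> A}) (i : 'I_m) (v : A) :
  {ffun 'I_m -> A} := [ffun k => if k == i then v else x k].

(* the family (a, y_2, ..., y_{k+1}) : first slot a, remaining slots y *)
Definition consA (k : nat) (a : A) (y : {ffun 'I_k -> A}) : {ffun 'I_k.+1 -> A} :=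
  [ffun l => if unlift ord0 l is Some j then y j else a].

Definition omit (k : nat) (x : {ffun 'I_k.+1 -> A}) (i : 'I_k.+1) :
  {ffun 'I_k -> A} := [ffun l => x (lift i l)].

Definition comm_assoc_algebra (mul : A -> A -> A) : Prop :=
  [/\ forall (a : K) (u v w : A), mul (a *: u + v) w = a *: mul u w + mul v w,
      forall u v, mul u v = mul v u
    & forall u v w, mul u (mul v w) = mul (mul u v) w].

Definition multilinear (m : nat) (br : {ffun 'I_m -> A} -> A) : Prop :=
  forall (x : {ffun 'I_m -> A}) (i : 'I_m) (a : K) (u v : A),
    br (replace x i (a *: u + v)) = a *: br (replace x i u) + br (replace x i v).

Definition skew_symmetric (m : nat) (br : {ffun 'I_m -> A} -> A) : Prop :=
  forall (x : {ffun 'I_m -> A}) (i j : 'I_m), i != j ->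
    br [ffun l => x (tperm i j l)] = - br x.

Definition filippov (k : nat) (br : {ffun 'I_k.+1 -> A} -> A) : Prop :=
  forall (x : {ffun 'I_k.+1 -> A}) (y : {ffun 'I_k -> A}),
    br (consA (br x) y) = \sum_(i < k.+1) br (replace x i (br (consA (x i) y))).

Definition nLie (k : nat) (br : {ffun 'I_k.+1 -> A} -> A) : Prop :=
  [/\ multilinear br, skew_symmetric br & filippov br].

Definition tp_compat (k : nat) (mul : A -> A -> A)
    (br : {ffun 'I_k.+1 -> A} -> A) : Prop :=
  forall (h : A) (a : {ffun 'I_k.+1 -> A}),
    k.+1%:R *: mul h (br a) = \sum_(i < k.+1) br (replace a i (mul h (a i))).

Definition transposed_Poisson_nLie (k : nat) (mul : A -> A -> A)
    (br : {ffun 'I_k.+1 -> A} -> A) : Prop :=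
  [/\ comm_assoc_algebra mul, nLie br & tp_compat mul br].

End TPnLie.

From HB Require Import structures.
From mathcomp Require Import all_boot all_order all_algebra all_fingroup.
From mathcomp Require Import complex.
From mathcomp Require Import reals.
Import Order.TTheory GRing.Theory Num.Theory.
Local Open Scope ring_scope.
Set Implicit Arguments. Unset Strict Implicit.

(* Write [z; y] for the bracket with z in front of y, n = m + 2, and
   inner = sum_i [x_1, .., h [x_i; y], .., x_n],
   outer = sum_i [x_1, .., [h x_i; y], .., x_n].
   Filippov followed by compatibility turns the left-hand side L into
   n inner - outer; after moving [x_i; y] into slot i (which costs exactly the
   sign (-1)^(i-1)) the right-hand side C becomes n h [[x]; y] - inner, and
   compatibility on [[x]; y] gives n h [[x]; y] = [h[x]; y] + L.  Expanding
   n [h[x]; y] by compatibility and then Filippov gives outer + C.  Eliminating,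
   (n - 1) [h[x]; y] = (n - 1) inner, hence (n - 1) (C - L) = 0, and n - 1 is
   invertible over the complex numbers. *)

Section Families.
Variables (K : pzRingType) (A : lmodType K).

Lemma replace_same k (x : {ffun 'I_k -> A}) i u : replace x i u i = u.
Proof. by rewrite ffunE eqxx. Qed.

Lemma replace_other k (x : {ffun 'I_k -> A}) i j u :
  j != i -> replace x i u j = x j.
Proof. by move=> ji; rewrite ffunE (negbTE ji). Qed.

Lemma replace_replace k (x : {ffun 'I_k -> A}) i u v :
  replace (replace x i u) i v = replace x i v.
Proof. by apply/ffunP => l; rewrite !ffunE; case: eqP. Qed.

Lemma replaceC k (x : {ffun 'I_k -> A}) i j u v : i != j ->
  replace (replace x i u) j v = replace (replace x j v) i u.
Proof.
move=> ij; apply/ffunP => l; rewrite !ffunE.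
by case: (eqVneq l j) => [->|//]; rewrite eq_sym (negbTE ij).
Qed.

Lemma consA0 k (z : A) (y : {ffun 'I_k -> A}) : consA z y ord0 = z.
Proof. by rewrite ffunE unlift_none. Qed.

Lemma consA_lift k (z : A) (y : {ffun 'I_k -> A}) j : consA z y (lift ord0 j) = y j.
Proof. by rewrite ffunE liftK. Qed.

Lemma replace_consA0 k (z v : A) (y : {ffun 'I_k -> A}) :
  replace (consA z y) ord0 v = consA v y.
Proof.
apply/ffunP => l; rewrite !ffunE; case: unliftP => [j ->|->].
  by rewrite eq_sym (negbTE (neq_lift _ _)).
by rewrite eqxx.
Qed.

Lemma replace_consA_lift k (z v : A) (y : {ffun 'I_k -> A}) j :
  replace (consA z y) (lift ord0 j) v = consA z (replace y j v).
Proof.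
apply/ffunP => l; rewrite !ffunE; case: unliftP => [i ->|->].
  by rewrite (inj_eq lift_inj) ffunE.
by rewrite (negbTE (neq_lift _ _)).
Qed.

Lemma consA_omit0 k (z : A) (w : {ffun 'I_k.+1 -> A}) :
  consA z (omit w ord0) = replace w ord0 z.
Proof.
apply/ffunP => l; rewrite !ffunE; case: unliftP => [j ->|->].
  by rewrite eq_sym (negbTE (neq_lift _ _)) ffunE.
by rewrite eqxx.
Qed.

Lemma omit_tperm k (w : {ffun 'I_k.+1 -> A}) (a b : 'I_k.+1) : b = a.+1 :> nat ->
  omit w b = omit [ffun l => w (tperm a b l)] a.
Proof.
move=> Eb; apply/ffunP => l; rewrite !ffunE; congr (w _).
have ab : a != b by rewrite -val_eqE /= Eb neq_ltn ltnSn.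
case: (ltngtP a l) => [al|la|al].
- have Elift : lift b l = lift a l by apply/val_inj; rewrite /= /bump Eb al (ltnW al).
  have b_lift : b != lift a l by rewrite -Elift neq_lift.
  by rewrite Elift (tpermD (neq_lift _ _) b_lift).
- have Elift : lift b l = lift a l.
    by apply/val_inj; rewrite /= /bump Eb leqNgt ltnS (ltnW la) leqNgt la.
  have b_lift : b != lift a l by rewrite -Elift neq_lift.
  by rewrite Elift (tpermD (neq_lift _ _) b_lift).
- have Elift : lift a l = b by apply/val_inj; rewrite /= /bump -al leqnn Eb.
  by rewrite Elift tpermR; apply/val_inj; rewrite /= /bump Eb -al ltnn.
Qed.

Lemma replace_tperm k (w : {ffun 'I_k -> A}) (a b : 'I_k) z :
  replace [ffun l => w (tperm a b l)] a z = [ffun l => replace w b z (tperm a b l)].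
Proof.
apply/ffunP => l; rewrite !ffunE.
by rewrite (can2_eq (tpermK a b) (tpermK a b)) tpermR.
Qed.

Lemma skew_consA_omit k (br : {ffun 'I_k.+1 -> A} -> A) : skew_symmetric br ->
  forall (w : {ffun 'I_k.+1 -> A}) z (i : 'I_k.+1),
  br (consA z (omit w i)) = (-1) ^+ i *: br (replace w i z).
Proof.
move=> br_skew w z [i lt_ik]; elim: i lt_ik w => [|i IHi] lt_ik w.
  by rewrite expr0 scale1r (_ : Ordinal lt_ik = ord0) ?consA_omit0 //; apply: val_inj.
have lt_ik' : (i < k.+1)%N by apply: ltnW.
set a := Ordinal lt_ik'; set b := Ordinal lt_ik.
have ab : a != b by rewrite -val_eqE /= ltn_eqF.
rewrite (omit_tperm w (erefl : val b = (val a).+1)) IHi replace_tperm br_skew //.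
by rewrite scalerN -scaleNr -mulN1r -exprS.
Qed.

End Families.

Section TransposedPoisson.
Variables (K : pzRingType) (A : lmodType K) (m : nat).
Variables (mul : A -> A -> A) (br : {ffun 'I_m.+2 -> A} -> A).
Hypothesis mul_linear_l : forall a u v w, mul (a *: u + v) w = a *: mul u w + mul v w.
Hypothesis mulC : commutative mul.
Hypothesis br_multilinear : multilinear br.
Hypothesis br_skew : skew_symmetric br.
Hypothesis br_filippov : filippov br.
Hypothesis br_tp : tp_compat mul br.

Definition mul_left h v := mul h v.

Fact mul_left_is_linear h : linear (mul_left h).
Proof. by move=> a u v; rewrite /mul_left !(mulC h) mul_linear_l. Qed.

HB.instance Definition _ h :=
  GRing.isLinear.Build K A A *:%R (mul_left h) (mul_left_is_linear h).

Definition br_slot x i v := br (replace x i v).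

HB.instance Definition _ x i :=
  GRing.isLinear.Build K A A *:%R (br_slot x i) (br_multilinear x i).

Definition br_consA y z := br (consA z y).

Fact br_consA_is_linear y : linear (br_consA y).
Proof.
move=> a u v; rewrite /br_consA -(replace_consA0 0 (a *: u + v)).
by rewrite -(replace_consA0 0 u) -(replace_consA0 0 v) br_multilinear.
Qed.

HB.instance Definition _ y :=
  GRing.isLinear.Build K A A *:%R (br_consA y) (br_consA_is_linear y).

Lemma tp_compat_consA h z (y : {ffun 'I_m.+1 -> A}) :
  m.+2%:R *: mul h (br (consA z y))
  = br (consA (mul h z) y) + \sum_(j < m.+1) br (consA z (replace y j (mul (y j) h))).
Proof.
rewrite br_tp big_ord_recl consA0 replace_consA0; congr (_ + _).
by apply: eq_bigr => j _; rewrite consA_lift replace_consA_lift mulC.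
Qed.

Lemma tp_compat_replace h x i u :
  m.+2%:R *: mul h (br (replace x i u))
  = br (replace x i (mul h u))
    + \sum_(j < m.+2 | j != i) br (replace (replace x j (mul h (x j))) i u).
Proof.
rewrite br_tp (bigD1 i) //= replace_same replace_replace; congr (_ + _).
by apply: eq_bigr => j ji; rewrite replace_other // replaceC // eq_sym.
Qed.

Lemma filippov_replace x i u y :
  br (consA (br (replace x i u)) y)
  = br (replace x i (br (consA u y)))
    + \sum_(j < m.+2 | j != i) br (replace (replace x i u) j (br (consA (x j) y))).
Proof.
rewrite br_filippov (bigD1 i) //= replace_same replace_replace; congr (_ + _).
by apply: eq_bigr => j ji; rewrite replace_other.
Qed.

Section Expansions.
Variables (h : A) (x : {ffun 'I_m.+2 -> A}) (y : {ffun 'I_m.+1 -> A}).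

Let lhs := \sum_(j < m.+1) br (consA (br x) (replace y j (mul (y j) h))).
Let inner := \sum_(i < m.+2) br (replace x i (mul h (br (consA (x i) y)))).
Let outer := \sum_(i < m.+2) br (replace x i (br (consA (mul h (x i)) y))).
Let cross := \sum_(i < m.+2) \sum_(j < m.+2 | j != i)
  br (replace (replace x j (mul h (x j))) i (br (consA (x i) y))).

Lemma lhs_expand : lhs = m.+2%:R *: inner - outer.
Proof.
rewrite /lhs; under eq_bigr do rewrite br_filippov.
rewrite exchange_big /= scaler_sumr -sumrB; apply: eq_bigr => i _.
rewrite -(raddf_sum (br_slot x i)) -(linearZ_LR (br_slot x i)) -(raddfB (br_slot x i)).
by rewrite /br_slot tp_compat_consA addrC addKr.
Qed.

Lemma cross_expand : cross = m.+2%:R *: mul h (br (consA (br x) y)) - inner.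
Proof.
rewrite br_filippov [mul h _](raddf_sum (mul_left h)) scaler_sumr -sumrB.
by apply: eq_bigr => i _; rewrite tp_compat_replace addrC addKr.
Qed.

Lemma bracket_mul_bracket_expand : m.+2%:R *: br (consA (mul h (br x)) y) = outer + cross.
Proof.
rewrite -(linearZ_LR (br_consA y)) br_tp raddf_sum /= /br_consA.
under eq_bigr do rewrite filippov_replace.
rewrite big_split /=; congr (_ + _).
rewrite (exchange_big_dep xpredT) //=; apply: eq_bigr => i _.
by apply: eq_bigl => j; rewrite eq_sym.
Qed.

Lemma bracket_mul_bracket_scaled :
  m.+1%:R *: br (consA (mul h (br x)) y) = m.+1%:R *: inner.
Proof.
set Q := br (consA (mul h (br x)) y); set S := m.+1%:R *: inner.
have scaleS (v : A) : m.+2%:R *: v = m.+1%:R *: v + v by rewrite -natr1 scalerDl scale1r.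
apply: (addIr Q); rewrite -scaleS bracket_mul_bracket_expand cross_expand tp_compat_consA.
rewrite -/lhs lhs_expand scaleS -/S.
by rewrite [S + _ - _]addrAC [Q + _]addrA addrK [outer + _]addrC -addrA subrK addrC.
Qed.

Lemma cross_scaled : m.+1%:R *: cross = m.+1%:R *: lhs.
Proof.
rewrite cross_expand tp_compat_consA -/lhs scalerBr scalerDr bracket_mul_bracket_scaled.
by rewrite [_ + _ *: lhs]addrC addrK.
Qed.

Lemma signed_omit_sum : \sum_(i < m.+2) \sum_(j < m.+2 | j != i)
    (-1) ^+ i *: br (consA (br (consA (x i) y)) (omit (replace x j (mul (x j) h)) i))
  = cross.
Proof.
apply: eq_bigr => i _; apply: eq_bigr => j _.
by rewrite (skew_consA_omit br_skew) signrZK mulC.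
Qed.

End Expansions.

End TransposedPoisson.

(* Indices are 0-based: slot i of the paper is slot i - 1 here, so the paper's
   sign (-1)^(i-1) reads (-1) ^+ i. *)
Theorem mainTheorem3 (R : realType) (m : nat) (A : lmodType (complex R))
    (mul : A -> A -> A) (br : {ffun 'I_m.+2 -> A} -> A) :
  transposed_Poisson_nLie mul br ->
  forall (h : A) (x : {ffun 'I_m.+2 -> A}) (y : {ffun 'I_m.+1 -> A}),
    \sum_(j < m.+1) br (consA (br x) (replace y j (mul (y j) h)))
    = \sum_(i < m.+2) \sum_(j < m.+2 | j != i)
        (-1) ^+ i *: br (consA (br (consA (x i) y))
                               (omit (replace x j (mul (x j) h)) i)).
Proof.
move=> [[mul_linear_l mulC _] [br_multilinear br_skew br_filippov] br_tp] h x y.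
have m1_neq0 : m.+1%:R != 0 :> complex R by rewrite pnatr_eq0.
apply: (scalerI m1_neq0).
by rewrite (signed_omit_sum mulC br_skew) (cross_scaled mul_linear_l mulC).
Qed.
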